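(* If $p$ is a linear groupoid term containing variables of all four colors $\alpha,\beta,\gamma,1$, then there is a term $q$ such that $p=q$ belongs to $\Sigma$ and $q$ has a subterm of the form $((xy)v)(zt)$ or $(u(yx))(zt)$, where $x,y,z,t,u$ are variables and $v$ is a term.
   Context: $\Sigma$ is the set of groupoid identities satisfied by each of the four operations $x+y$, $x-y$, $-x+y$, $-x-y$ in every abelian group. A term is linear if no variable occurs in it more than once. Let $\mathbf{KL}=\{1,\alpha,\beta,\gamma\}$ be the Klein 4-group ($\alpha^2=\beta^2=1$, $\alpha\beta=\gamma$). The color of a variable occurrence in a term is the element of $\mathbf{KL}$ obtained by following the path from the whole term down to that occurrence, starting with $1$ and multiplying by $\alpha$ each time one passes to the left factor of a product and by $\beta$ each time one passes to the right factor. *)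

From HB Require Import structures.
From mathcomp Require Import all_boot all_algebra.
Set Implicit Arguments. Unset Strict Implicit. Unset Printing Implicit Defensive.
Import GRing.Theory.
Local Open Scope ring_scope.

Inductive term : Type :=
| Var : nat -> term
| Mul : term -> term -> term.

Fixpoint vars (t : term) : seq nat :=
  match t with
  | Var n => [:: n]
  | Mul a b => vars a ++ vars b
  end.

Definition linear_term (t : term) : bool := uniq (vars t).

Fixpoint eval_term (G : Type) (op : G -> G -> G) (e : nat -> G) (t : term) : G :=
  match t with
  | Var n => e n
  | Mul a b => op (eval_term op e a) (eval_term op e b)
  end.

Definition op1 (G : zmodType) (x y : G) : G := x + y.
Definition op2 (G : zmodType) (x y : G) : G := x - y.
Definition op3 (G : zmodType) (x y : G) : G := - x + y.
Definition op4 (G : zmodType) (x y : G) : G := - x - y.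

Definition holds_in (G : Type) (op : G -> G -> G) (p q : term) : Prop :=
  forall e : nat -> G, eval_term op e p = eval_term op e q.

Definition Sigma (p q : term) : Prop :=
  forall G : zmodType,
    holds_in (@op1 G) p q /\ holds_in (@op2 G) p q /\
    holds_in (@op3 G) p q /\ holds_in (@op4 G) p q.

Inductive KL : Type := K1 | Kalpha | Kbeta | Kgamma.
Scheme Equality for KL.
HB.instance Definition _ := hasDecEq.Build KL (fun x y => iffP idP (@internal_KL_dec_bl x y) (@internal_KL_dec_lb x y)).

Definition KLmul (a b : KL) : KL :=
  match a, b with
  | K1, x | x, K1 => x
  | Kalpha, Kalpha | Kbeta, Kbeta | Kgamma, Kgamma => K1
  | Kalpha, Kbeta | Kbeta, Kalpha => Kgamma
  | Kalpha, Kgamma | Kgamma, Kalpha => Kbeta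
  | Kbeta, Kgamma | Kgamma, Kbeta => Kalpha
  end.

(* Colored variable occurrences: the color is obtained along the path from the
   root, starting with 1, multiplying by alpha when passing to a left factor
   and by beta when passing to a right factor. *)
Fixpoint colored_occ (c : KL) (t : term) : seq (nat * KL) :=
  match t with
  | Var n => [:: (n, c)]
  | Mul a b => colored_occ (KLmul c Kalpha) a ++ colored_occ (KLmul c Kbeta) b
  end.

Definition has_color (t : term) (k : KL) : Prop :=
  exists n, (n, k) \in colored_occ K1 t.

Inductive subterm : term -> term -> Prop :=
| sub_refl t : subterm t t
| sub_l s a b : subterm s a -> subterm s (Mul a b)
| sub_r s a b : subterm s b -> subterm s (Mul a b).

From mathcomp Require Import all_boot all_algebra.
From mathcomp Require Import zify.
Set Implicit Arguments. Unset Strict Implicit. Unset Printing Implicit Defensive.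

(* Each of the four operations evaluates a term to a signed sum of its variable
   occurrences, the sign being a character KL -> {1, -1} applied to the colour;
   so an identity lies in Sigma as soon as both sides have the same multiset of
   coloured occurrences.  That multiset is determined by the numbers of inner
   nodes of each colour, and the admissible count vectors are characterised by
   a few linear inequalities.  Removing from the counts of p those of the
   gadget ((xy)v)(zt) or (u(yx))(zt), rooted at a suitable colour, leaves an
   admissible vector; a tree realising it, with the gadget grafted at a leaf of
   the right colour and then relabelled, is the required q. *)

Lemma KLmul_eq (c k d : KL) : (KLmul c k == d) = (c == KLmul d k).
Proof. by case: c; case: d; case: k. Qed.

Fixpoint inner_count (c : KL) (t : term) (d : KL) : nat :=
  match t with
  | Var _ => 0
  | Mul a b => (c == d) + inner_count (KLmul c Kalpha) a d
                        + inner_count (KLmul c Kbeta) b d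
  end.

Definition leaf_count (c : KL) (t : term) (d : KL) : nat :=
  count (fun x : nat * KL => x.2 == d) (colored_occ c t).

(* A node of colour d is the root, or the left child of an inner node of
   colour d*alpha, or the right child of one of colour d*beta. *)
Lemma leaf_count_inner_count c t d :
  leaf_count c t d + inner_count c t d =
  (c == d) + inner_count c t (KLmul d Kalpha) + inner_count c t (KLmul d Kbeta).
Proof.
elim: t c => [n|a IHa b IHb] c /=; first by rewrite /leaf_count /= !addn0.
rewrite /leaf_count /= count_cat -/(leaf_count _ a d) -/(leaf_count _ b d).
have := IHa (KLmul c Kalpha); have := IHb (KLmul c Kbeta).
rewrite !KLmul_eq; lia.
Qed.

Lemma eq_leaf_count s t :
  inner_count K1 s =1 inner_count K1 t -> leaf_count K1 s =1 leaf_count K1 t.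
Proof.
move=> Est d; have := leaf_count_inner_count K1 s d.
have := leaf_count_inner_count K1 t d; rewrite !Est; lia.
Qed.

Lemma has_color_leaf_count t d : has_color t d -> 0 < leaf_count K1 t d.
Proof.
by case=> n occ; rewrite /leaf_count -has_count; apply/hasP; exists (n, d).
Qed.

Lemma graft_at_leaf c t d g : 0 < leaf_count c t d ->
  exists t', subterm g t' /\ forall e, inner_count c t' e = inner_count c t e + inner_count d g e.
Proof.
elim: t c => [n|a IHa b IHb] c /=.
  rewrite /leaf_count /= addn0 lt0b => /eqP ->.
  by exists g; split; [constructor|].
rewrite /leaf_count /= count_cat -/(leaf_count _ a d) -/(leaf_count _ b d).
case: (posnP (leaf_count (KLmul c Kalpha) a d)) => [-> /= Hb|Ha _].
  have [b' [sub_b' Eb']] := IHb _ Hb.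
  by exists (Mul a b'); split; [exact: sub_r | move=> e /=; rewrite Eb'; lia].
have [a' [sub_a' Ea']] := IHa _ Ha.
by exists (Mul a' b); split; [exact: sub_l | move=> e /=; rewrite Ea'; lia].
Qed.

(* The first four conditions say that [leaf_count_inner_count] forces a
   nonnegative number of leaves of each colour; the last that a tree with an
   inner node has its root inner. *)
Definition admissible (v : KL -> nat) : Prop :=
  v K1 <= 1 + v Kalpha + v Kbeta /\ v Kalpha <= v K1 + v Kgamma /\
  v Kbeta <= v K1 + v Kgamma /\ v Kgamma <= v Kalpha + v Kbeta /\
  (v K1 = 0 -> v Kalpha + v Kbeta + v Kgamma = 0).

Lemma inner_count_admissible t : admissible (inner_count K1 t).
Proof.
have E1 := leaf_count_inner_count K1 t K1.
have Ea := leaf_count_inner_count K1 t Kalpha.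
have Eb := leaf_count_inner_count K1 t Kbeta.
have Eg := leaf_count_inner_count K1 t Kgamma.
rewrite /= in E1 Ea Eb Eg; rewrite /admissible.
case: t E1 Ea Eb Eg => [n|a b] /=; lia.
Qed.

Definition dec (v : KL -> nat) (d : KL) : KL -> nat :=
  fun e => if e == d then v e - 1 else v e.

Lemma admissible_dec v : admissible v -> 0 < v K1 + v Kalpha + v Kbeta + v Kgamma ->
  exists2 d, 0 < v d & admissible (dec v d).
Proof.
rewrite /admissible => Hv Hpos.
have [H|[H|[H|H]]] : (0 < v K1 /\ admissible (dec v K1)) \/
  (0 < v Kalpha /\ admissible (dec v Kalpha)) \/
  (0 < v Kbeta /\ admissible (dec v Kbeta)) \/
  (0 < v Kgamma /\ admissible (dec v Kgamma)) by rewrite /admissible /dec /=; lia.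
all: by case: H => H1 H2; eexists; [exact: H1 | exact: H2].
Qed.

Lemma admissible_slack v d : admissible v ->
  v d <= (K1 == d) + v (KLmul d Kalpha) + v (KLmul d Kbeta).
Proof. by rewrite /admissible; case: d => /=; lia. Qed.

Lemma admissible_realizable v : admissible v -> exists s, inner_count K1 s =1 v.
Proof.
move Hn : (v K1 + v Kalpha + v Kbeta + v Kgamma) => n.
elim: n v Hn => [|n IHn] v Hn Hv.
  by exists (Var 0) => e /=; case: e; lia.
have [d vd_gt0 Hdec] := admissible_dec Hv (ltac:(lia)).
have [s Es] : exists s, inner_count K1 s =1 dec v d.
  by apply: IHn Hdec; move: vd_gt0 Hn; rewrite /dec; case: d => /=; lia.
have Hleaf : 0 < leaf_count K1 s d.
  have := leaf_count_inner_count K1 s d; have := admissible_slack d Hv.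
  by rewrite !Es /dec eqxx; case: d {Hdec Es Hn} vd_gt0 => /=; lia.
have [s' [_ Es']] := graft_at_leaf (Mul (Var 0) (Var 0)) Hleaf.
by exists s' => e; rewrite Es' Es /dec /=; case: (eqVneq e d) => [->|ne] /=; lia.
Qed.

Fixpoint skeleton (t : term) : term :=
  match t with
  | Var _ => Var 0
  | Mul a b => Mul (skeleton a) (skeleton b)
  end.

Lemma perm_map_cat_split (T U : eqType) (f : T -> U) (u w : seq U) (s : seq T) :
  perm_eq (u ++ w) (map f s) ->
  exists s1 s2, [/\ perm_eq s (s1 ++ s2), perm_eq u (map f s1) & perm_eq w (map f s2)].
Proof.
elim: u s => [|k u IHu] s /= Hs; first by exists [::], s; rewrite perm_refl.
have /mapP[x xs Ek] : k \in map f s by rewrite -(perm_mem Hs) mem_head.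
subst k.
have Hrem : perm_eq (u ++ w) (map f (rem x s)).
  by rewrite -(perm_cons (f x)); apply: (perm_trans Hs); exact: (perm_map f (perm_to_rem xs)).
have [s1 [s2 [P P1 P2]]] := IHu _ Hrem.
exists (x :: s1), s2; split=> //; last by rewrite /= perm_cons.
by apply: (perm_trans (perm_to_rem xs)); rewrite perm_cons.
Qed.

Lemma relabel s c (ls : seq (nat * KL)) :
  perm_eq (map snd (colored_occ c s)) (map snd ls) ->
  exists q, skeleton q = skeleton s /\ perm_eq (colored_occ c q) ls.
Proof.
elim: s c ls => [n|a IHa b IHb] c ls /= Hs.
  case: ls Hs => [|[m k] [|? ?]] Hs; move: (perm_size Hs) => //= _.
  have := perm_mem Hs c; rewrite /= !inE eqxx => /esym/eqP ->.
  by exists (Var m).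
rewrite map_cat in Hs; have [ls1 [ls2 [P P1 P2]]] := perm_map_cat_split Hs.
have [qa [Sa Pa]] := IHa _ _ P1; have [qb [Sb Pb]] := IHb _ _ P2.
exists (Mul qa qb); rewrite /= Sa Sb; split=> //.
by rewrite perm_sym in P; exact: perm_trans (perm_cat Pa Pb) P.
Qed.

Lemma subterm_skeleton P t q : subterm P t -> skeleton q = skeleton t ->
  exists2 P', subterm P' q & skeleton P' = skeleton P.
Proof.
move=> sub_Pt; elim: sub_Pt q => {P t} [t|P a b _ IH|P a b _ IH] q Eq.
- by exists q; first constructor.
- case: q Eq => // qa qb [/IH[P' ? ?] _]; exists P' => //; exact: sub_l.
- case: q Eq => // qa qb [_ /IH[P' ? ?]]; exists P' => //; exact: sub_r.
Qed.

Lemma relabel_leaf_count s p : leaf_count K1 s =1 leaf_count K1 p ->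
  exists q, skeleton q = skeleton s /\ perm_eq (colored_occ K1 q) (colored_occ K1 p).
Proof.
move=> Esp; apply: relabel; apply/allP => k _; apply/eqP.
by rewrite !count_map; apply: Esp.
Qed.

Section SignedSum.
Local Open Scope ring_scope.

Definition signed (G : zmodType) (b : bool) (x : G) : G := if b then - x else x.

Variables (G : zmodType) (op : G -> G -> G) (neg : KL -> bool).
Hypothesis signed_op : forall c x y,
  signed (neg (KLmul c Kalpha)) x + signed (neg (KLmul c Kbeta)) y = signed (neg c) (op x y).

Lemma eval_term_signed_sum e t c :
  \sum_(o <- colored_occ c t) signed (neg o.2) (e o.1) = signed (neg c) (eval_term op e t).
Proof.
elim: t c => [n|a IHa b IHb] c /=; first by rewrite big_seq1.
by rewrite big_cat /= IHa IHb signed_op.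
Qed.

Lemma perm_colored_occ_holds p q : neg K1 = false ->
  perm_eq (colored_occ K1 p) (colored_occ K1 q) -> holds_in op p q.
Proof.
move=> neg1 Epq e; have := eval_term_signed_sum e p K1.
have := eval_term_signed_sum e q K1; rewrite neg1 /= => <- <-.
exact: perm_big.
Qed.

End SignedSum.

(* For x - y, -x + y and -x - y the sign of an occurrence is the character of
   KL with kernel {1, alpha}, {1, beta} and {1, gamma} respectively. *)
Lemma perm_colored_occ_Sigma p q :
  perm_eq (colored_occ K1 p) (colored_occ K1 q) -> Sigma p q.
Proof.
move=> Epq G; split; last split; last split.
- exact: (@perm_colored_occ_holds G _ (fun _ => false)).
- apply: (@perm_colored_occ_holds G _ (fun d => (d == Kbeta) || (d == Kgamma))) => // c x y.
  by case: c; rewrite /signed /op2 /= ?GRing.opprB ?GRing.opprK // GRing.addrC.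
- apply: (@perm_colored_occ_holds G _ (fun d => (d == Kalpha) || (d == Kgamma))) => // c x y.
  by case: c; rewrite /signed /op3 /= ?GRing.opprD ?GRing.opprK // GRing.addrC.
- apply: (@perm_colored_occ_holds G _ (fun d => (d == Kalpha) || (d == Kbeta))) => // c x y.
  by case: c; rewrite /signed /op4 /= ?GRing.opprD ?GRing.opprK // GRing.addrC.
Qed.

(* The counts left over by the gadget g rooted at colour c are realised by a
   tree having a leaf of colour c, where g can be grafted. *)
Definition fits (w : KL -> nat) (c : KL) (g : term) : Prop :=
  (forall e, inner_count c g e <= w e) /\
  admissible (fun e => w e - inner_count c g e) /\
  w c - inner_count c g c <
    (K1 == c) + (w (KLmul c Kalpha) - inner_count c g (KLmul c Kalpha))
              + (w (KLmul c Kbeta) - inner_count c g (KLmul c Kbeta)).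

Lemma graft_fitting_gadget p c g : fits (inner_count K1 p) c g ->
  exists q, Sigma p q /\ exists2 P, subterm P q & skeleton P = skeleton g.
Proof.
case=> le_gp [adm slack].
have [s0 Es0] := admissible_realizable adm.
have s0_leaf : 0 < leaf_count K1 s0 c.
  by have := leaf_count_inner_count K1 s0 c; rewrite !Es0; lia.
have [s [sub_gs Es]] := graft_at_leaf g s0_leaf.
have Esp : inner_count K1 s =1 inner_count K1 p by move=> e; rewrite Es Es0 subnK.
have [q [Sq Pq]] := relabel_leaf_count (eq_leaf_count Esp).
exists q; split; first by apply: perm_colored_occ_Sigma; rewrite perm_sym.
exact: subterm_skeleton sub_gs Sq.
Qed.

Definition left_gadget : term :=
  Mul (Mul (Mul (Var 0) (Var 0)) (Var 0)) (Mul (Var 0) (Var 0)).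

Definition right_gadget : term :=
  Mul (Mul (Var 0) (Mul (Var 0) (Var 0))) (Mul (Var 0) (Var 0)).

Lemma skeleton_left_gadget P : skeleton P = skeleton left_gadget ->
  exists (x y z t : nat) (v : term), P = Mul (Mul (Mul (Var x) (Var y)) v) (Mul (Var z) (Var t)).
Proof.
case: P => [? | [? | [? | [x|? ?] [y|? ?]] v] [? | [z|? ?] [t|? ?]]] // [].
by exists x, y, z, t, v.
Qed.

Lemma skeleton_right_gadget P : skeleton P = skeleton right_gadget ->
  exists (x y z t u : nat), P = Mul (Mul (Var u) (Mul (Var y) (Var x))) (Mul (Var z) (Var t)).
Proof.
case: P => [? | [? | [u|? ?] [? | [y|? ?] [x|? ?]]] [? | [z|? ?] [t|? ?]]] //= _.
by exists x, y, z, t, u.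
Qed.

Ltac fits_arith := rewrite /fits /admissible /=; split; [case=> /=; lia | lia].

(* Every colour occurs as a leaf of p: if some colour other than 1 labels no
   inner node, or the root is the only inner node of colour 1 and there are more
   than three others, the left gadget fits; otherwise some colour occurs at two
   leaves and the right gadget fits there. *)
Lemma gadget_fits w : admissible w ->
  (forall d, w d < (K1 == d) + w (KLmul d Kalpha) + w (KLmul d Kbeta)) ->
  exists c, fits w c left_gadget \/ fits w c right_gadget.
Proof.
rewrite /admissible => adm leaves.
have := leaves K1; have := leaves Kalpha; have := leaves Kbeta; have := leaves Kgamma.
rewrite /= => lg lb la l1.
have [wa0|wa_gt0] := posnP (w Kalpha); first by exists Kbeta; left; fits_arith.
have [wb0|wb_gt0] := posnP (w Kbeta); first by exists Kalpha; left; fits_arith.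
have [wg0|wg_gt0] := posnP (w Kgamma); first by exists K1; left; fits_arith.
have [root|nonroot] : (w K1 = 1 /\ 3 < w Kalpha + w Kbeta + w Kgamma) \/
    (w K1 = 1 -> w Kalpha + w Kbeta + w Kgamma = 3) by lia.
  by exists Kgamma; left; fits_arith.
have [C|[C|[C|C]]] : w K1 + 1 < 1 + w Kalpha + w Kbeta \/
    w Kalpha + 1 < w K1 + w Kgamma \/ w Kbeta + 1 < w K1 + w Kgamma \/
    w Kgamma + 1 < w Kalpha + w Kbeta by lia.
- by exists K1; right; fits_arith.
- by exists Kalpha; right; fits_arith.
- by exists Kbeta; right; fits_arith.
- by exists Kgamma; right; fits_arith.
Qed.

Lemma has_color_inner_count t d : has_color t d ->
  inner_count K1 t d < (K1 == d) + inner_count K1 t (KLmul d Kalpha) + inner_count K1 t (KLmul d Kbeta).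
Proof.
by move/has_color_leaf_count; have := leaf_count_inner_count K1 t d; lia.
Qed.

Theorem theorem4p2 (p : term) :
  linear_term p ->
  has_color p Kalpha -> has_color p Kbeta -> has_color p Kgamma -> has_color p K1 ->
  exists q : term, Sigma p q /\
    ((exists (x y z t : nat) (v : term),
        subterm (Mul (Mul (Mul (Var x) (Var y)) v) (Mul (Var z) (Var t))) q) \/
     (exists (x y z t u : nat),
        subterm (Mul (Mul (Var u) (Mul (Var y) (Var x))) (Mul (Var z) (Var t))) q)).
Proof.
move=> _ pa pb pg p1.
have leaves d : inner_count K1 p d <
    (K1 == d) + inner_count K1 p (KLmul d Kalpha) + inner_count K1 p (KLmul d Kbeta).
  by apply: has_color_inner_count; case: d.
have [c [fit|fit]] := gadget_fits (inner_count_admissible p) leaves.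
- have [q [Spq [P sub_Pq /skeleton_left_gadget[x [y [z [t [v EP]]]]]]]] :=
    graft_fitting_gadget fit.
  by exists q; split=> //; left; exists x, y, z, t, v; rewrite -EP.
- have [q [Spq [P sub_Pq /skeleton_right_gadget[x [y [z [t [u EP]]]]]]]] :=
    graft_fitting_gadget fit.
  by exists q; split=> //; right; exists x, y, z, t, u; rewrite -EP.
Qed.
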